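(* Let $p\equiv11\pmod{12}$, $m$ odd, $\Theta\in\mathrm{Aut}(R_k)$ with order dividing $p^s$, and $\beta\in\mathbb{F}_p$ with $\beta^2=3$. Then $x^2+1$, $x^2+\beta x+1$, $x^2-\beta x+1$ are irreducible over $R_k$ and $x^{6p^s}+1=(x^2+1)^{p^s}(x^2+\beta x+1)^{p^s}(x^2-\beta x+1)^{p^s}$. Every skew $\Theta$-negacyclic code $\mathcal C$ of length $6p^s$ over $R_k$ decomposes as $\mathcal C=\mathcal C_1\oplus\mathcal C_2\oplus\mathcal C_3$ with $\mathcal C_1,\mathcal C_2,\mathcal C_3$ left ideals of $R_k[x;\Theta]/\langle(x^2+1)^{p^s}\rangle$, $R_k[x;\Theta]/\langle(x^2+\beta x+1)^{p^s}\rangle$, $R_k[x;\Theta]/\langle(x^2-\beta x+1)^{p^s}\rangle$; $\mathcal C^\perp=\mathcal C_1^\perp\oplus\mathcal C_2^\perp\oplus\mathcal C_3^\perp$ with $\mathcal C_1^\perp,\mathcal C_2^\perp,\mathcal C_3^\perp$ left ideals of $R_k[x;\Theta]/\langle(x^2+1)^{p^s}\rangle$, $R_k[x;\Theta]/\langle(x^2-\beta x+1)^{p^s}\rangle$, $R_k[x;\Theta]/\langle(x^2+\beta x+1)^{p^s}\rangle$; and $\mathcal C$ is self-dual iff $\mathcal C_1=\mathcal C_1^\perp$, $\mathcal C_2=\mathcal C_3^\perp$, $\mathcal C_3=\mathcal C_2^\perp$.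
   Context: $R_k=\mathbb{F}_{p^m}[u]/\langle u^k\rangle$; $R_k[x;\Theta]$ is the skew polynomial ring with $xa=\Theta(a)x$. A skew $\Theta$-negacyclic code of length $N$ is a left ideal of $R_k[x;\Theta]/\langle x^N+1\rangle$; decompositions are via the Chinese Remainder isomorphism for the stated factorization. $\mathcal C^\perp$ is the Euclidean dual and $\mathcal C_i^\perp$ its component in the indicated factor ring. *)

From HB Require Import structures.
From mathcomp Require Import all_boot all_order all_algebra.
Set Implicit Arguments.
Unset Strict Implicit.
Unset Printing Implicit Defensive.
Import GRing.Theory.
Local Open Scope ring_scope.

(* R_k = F_{p^m}[u]/<u^k>, realised as the quotient ring F[u]/<u^k>
   (MathComp's qpoly; for 0 < k the modulus u^k is monic of size > 1). *)
Notation Rk F k := {poly %/ ('X^k : {poly F})}.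

(* Multiplication in the skew polynomial ring R[x; th], where x a = th(a) x:
   (sum f_i x^i)(sum g_j x^j) = sum_n (sum_{i+j=n} f_i th^i(g_j)) x^n.
   Elements of R[x; th] are represented by their coefficient polynomials. *)
Definition skew_mul (R : nzRingType) (th : R -> R) (f g : {poly R}) : {poly R} :=
  \poly_(n < (size f + size g).-1) \sum_(i < n.+1) f`_i * iter i th g`_(n - i).

(* For the moduli used below (coefficients in the prime field, which th fixes,
   and central in R[x;th]) this is the reduction map R[x;th] -> R[x;th]/<g>,
   elements of the quotient being represented by polynomials of size < size g. *)
Definition qmod (R : nzRingType) (c g : {poly R}) : {poly R} := Pdiv.Ring.rmodp c g.

Definition skew_left_ideal (R : nzRingType) (th : R -> R) (g : {poly R})
    (I : {poly R} -> Prop) : Prop :=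
  [/\ forall c, I c -> (size c < size g)%N,
      I 0,
      forall c d, I c -> I d -> I (c + d) &
      forall a c, I c -> I (qmod (skew_mul th a c) g)].

Definition skew_negacyclic (R : nzRingType) (th : R -> R) (N : nat)
    (C : {poly R} -> Prop) : Prop :=
  skew_left_ideal th ('X^N + 1) C.

Definition euclid_dual (R : nzRingType) (N : nat) (C : {poly R} -> Prop) :
    {poly R} -> Prop :=
  fun d => (size d <= N)%N /\ forall c, C c -> \sum_(i < N) c`_i * d`_i = 0.

(* Component of C in the factor ring R[x;th]/<g> under the Chinese Remainder map
   c |-> (c mod g_1, c mod g_2, c mod g_3). *)
Definition crt_comp (R : nzRingType) (g : {poly R}) (C : {poly R} -> Prop) :
    {poly R} -> Prop :=
  fun r => exists c, C c /\ r = qmod c g.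

Definition poly_unit (R : comNzRingType) (f : {poly R}) : Prop :=
  exists g, f * g = 1.

Definition poly_irreducible (R : comNzRingType) (f : {poly R}) : Prop :=
  [/\ f != 0, ~ poly_unit f &
      forall g h, f = g * h -> poly_unit g \/ poly_unit h].

(* Write q = p^s.  The three quadratics have coefficients in the prime field,
   which Theta fixes, and their product is x^6 + 1 because beta^2 = 3; raising
   to the q-th power (Frobenius) gives x^(6q) + 1 = g1 g2 g3.  The same Frobenius
   trick turns the Bezout identity
     6 = 2 f2 f3 + (beta x + 2) f1 f3 + (2 - beta x) f1 f2
   into t1 g2 g3 + t2 g1 g3 + t3 g1 g2 = 1, whose three terms are polynomials
   in x^q; these are central in R_k[x; Theta] since Theta^q = 1, so they are
   orthogonal central idempotents modulo x^(6q) + 1 and split every left ideal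
   along the Chinese Remainder decomposition.  The Euclidean dual of a skew
   negacyclic code is again one: the coordinate pairing intertwines left
   multiplication by x with Theta, and x^(12q) acts trivially.  Finally each
   quadratic is irreducible because its image modulo u has discriminant -1 or
   -4, and -1 is not a square in F_{p^m} when p = 3 mod 4 and m is odd. *)
From Pilot Require Import Defs.
From HB Require Import structures.
From mathcomp Require Import all_boot all_order all_algebra all_field.
From mathcomp Require Import zify ring.
Import GRing.Theory Pdiv.Ring.
Local Open Scope ring_scope.
Set Implicit Arguments.
Unset Strict Implicit.
Unset Printing Implicit Defensive.

Section SkewMul.
Variables (R : comNzRingType) (th : {rmorphism R -> R}).

Lemma coef_iter_map_poly i (v : {poly R}) j :
  (iter i (map_poly th) v)`_j = iter i th v`_j.
Proof. by elim: i => [|i IH] //=; rewrite coef_map IH. Qed.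

Lemma iter_rmorph0 i : iter i th 0 = 0.
Proof. by elim: i => [|i IH] //=; rewrite IH rmorph0. Qed.

Lemma sum_ord_widen n1 n2 (T : nat -> R) : (n1 <= n2)%N ->
  (forall i, (n1 <= i)%N -> T i = 0) ->
  \sum_(i < n1) T i = \sum_(i < n2) T i.
Proof.
move=> le_n12 T0; rewrite (big_ord_widen _ _ le_n12) big_mkcond /=.
by apply: eq_bigr => i _; case: ifP => // /negbT; rewrite -leqNgt => /T0 ->.
Qed.

Lemma skew_mulE a v : skew_mul th a v =
  \sum_(i < size a) a`_i *: ('X^i * iter i (map_poly th) v).
Proof.
apply/polyP => n; rewrite coef_poly coef_sum.
under [RHS]eq_bigr => i _ do rewrite coefZ coefXnM coef_iter_map_poly.
case: ltnP => hn.
  pose T i := if (i <= n)%N then a`_i * iter i th v`_(n - i) else 0.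
  have -> : \sum_(i < n.+1) a`_i * iter i th v`_(n - i) = \sum_(i < n.+1) T i.
    by apply: eq_bigr => i _; rewrite /T -ltnS ltn_ord.
  have -> : \sum_(i < size a) a`_i * (if (n < i)%N then 0 else iter i th v`_(n - i))
     = \sum_(i < size a) T i.
    by apply: eq_bigr => i _; rewrite /T; case: (leqP i n) => h; rewrite ?mulr0.
  rewrite (@sum_ord_widen n.+1 (maxn n.+1 (size a))) ?leq_maxl //; last first.
    by move=> i hi; rewrite /T leqNgt hi.
  rewrite [RHS](@sum_ord_widen (size a) (maxn n.+1 (size a))) ?leq_maxr //.
  by move=> i hi; rewrite /T nth_default // mul0r if_same.
symmetry; apply: big1 => i _; case: ltnP; rewrite ?mulr0 // => hin.
have h : (size v <= n - i)%N by have := ltn_ord i; lia.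
by rewrite (nth_default 0 h) iter_rmorph0 mulr0.
Qed.

Lemma iter_map_polyD i (v w : {poly R}) :
  iter i (map_poly th) (v + w) = iter i (map_poly th) v + iter i (map_poly th) w.
Proof. by elim: i => [|i IH] //=; rewrite IH rmorphD. Qed.

Lemma iter_map_polyMr i (q g : {poly R}) : map_poly th g = g ->
  iter i (map_poly th) (q * g) = iter i (map_poly th) q * g.
Proof. by move=> thg; elim: i => [|i IH] //=; rewrite IH rmorphM /= thg. Qed.

Lemma skew_mulDr a v w : skew_mul th a (v + w) = skew_mul th a v + skew_mul th a w.
Proof.
rewrite !skew_mulE -big_split /=; apply: eq_bigr => i _.
by rewrite iter_map_polyD mulrDr scalerDr.
Qed.

Lemma skew_mulMr a q g : map_poly th g = g ->
  skew_mul th a (q * g) = skew_mul th a q * g.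
Proof.
move=> thg; rewrite !skew_mulE mulr_suml; apply: eq_bigr => i _.
by rewrite iter_map_polyMr // mulrA scalerAl.
Qed.

Lemma skew_mulXl v : skew_mul th 'X v = 'X * map_poly th v.
Proof.
rewrite skew_mulE size_polyX !big_ord_recl big_ord0 !coefX /=.
by rewrite scale0r add0r scale1r addr0 expr1.
Qed.

Lemma skew_mul_invariant (e c : {poly R}) :
  (forall i, e`_i != 0 -> iter i (map_poly th) c = c) ->
  skew_mul th e c = e * c.
Proof.
move=> ec; rewrite skew_mulE.
have -> : e * c = (\poly_(i < size e) e`_i) * c by rewrite coefK.
rewrite poly_def mulr_suml; apply: eq_bigr => i _.
have [->|/ec ->] := eqVneq e`_i 0; first by rewrite !scale0r mul0r.
by rewrite scalerAl.
Qed.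

End SkewMul.

Lemma rmodp_add_mul_eq (R : comNzRingType) (G X Y q : {poly R}) :
  G \is monic -> X = Y + q * G -> rmodp X G = rmodp Y G.
Proof.
by move=> mG ->; rewrite (Pdiv.RingMonic.rmodpD mG) (Pdiv.RingMonic.rmodp_mull mG) addr0.
Qed.

Lemma rmodp_eq_add_mul (R : comNzRingType) (G X Y : {poly R}) : G \is monic ->
  rmodp X G = rmodp Y G -> X = Y + (rdivp X G - rdivp Y G) * G.
Proof.
move=> mG eXY; move: (Pdiv.RingMonic.rdivp_eq mG X) (Pdiv.RingMonic.rdivp_eq mG Y).
rewrite eXY; set qX := rdivp X G; set qY := rdivp Y G; set r := rmodp Y G.
by move=> -> ->; ring.
Qed.

Section ChineseRemainder.
Variables (R : comNzRingType) (th : {rmorphism R -> R}).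

Lemma crt_comp_left_ideal (G g h : {poly R}) (I : {poly R} -> Prop) :
  G = g * h -> g \is monic -> G \is monic -> map_poly th g = g ->
  skew_left_ideal th G I -> skew_left_ideal th g (crt_comp g I).
Proof.
move=> eG mg mG thg [Isz I0 ID IM]; split.
- by move=> _ [c [_ ->]]; rewrite /qmod ltn_rmodpN0 // monic_neq0.
- by exists 0; split => //; rewrite /qmod rmod0p.
- move=> _ _ [c [Ic ->]] [d [Id ->]]; exists (c + d); split; first exact: ID.
  by rewrite /qmod (Pdiv.RingMonic.rmodpD mg).
move=> a _ [c [Ic ->]]; exists (qmod (skew_mul th a c) G); split; first exact: IM.
rewrite /qmod; set ac := skew_mul th a c.
have -> : rmodp (rmodp ac G) g = rmodp ac g.
  symmetry; apply: (rmodp_add_mul_eq (q := rdivp ac G * h)) => //.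
  rewrite {1}(Pdiv.RingMonic.rdivp_eq mG ac) eG; ring.
symmetry; apply: (rmodp_add_mul_eq (q := skew_mul th a (rdivp c g))) => //.
by rewrite /ac {1}(Pdiv.RingMonic.rdivp_eq mg c) skew_mulDr skew_mulMr // addrC.
Qed.

(* The e_i below are the central orthogonal idempotents of the decomposition:
   a codeword c is recovered as sum_i e_i c_i from any lifts c_i of its
   components. *)
Lemma crt_comp_decomposition (G g1 g2 g3 t1 t2 t3 : {poly R})
    (I : {poly R} -> Prop) (c : {poly R}) :
  let e1 := t1 * (g2 * g3) in let e2 := t2 * (g1 * g3) in let e3 := t3 * (g1 * g2) in
  G = g1 * g2 * g3 -> G \is monic ->
  g1 \is monic -> g2 \is monic -> g3 \is monic -> e1 + e2 + e3 = 1 ->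
  (forall v, skew_mul th e1 v = e1 * v) -> (forall v, skew_mul th e2 v = e2 * v) ->
  (forall v, skew_mul th e3 v = e3 * v) ->
  skew_left_ideal th G I -> (size c < size G)%N ->
  (I c <-> [/\ crt_comp g1 I (qmod c g1), crt_comp g2 I (qmod c g2)
             & crt_comp g3 I (qmod c g3)]).
Proof.
move=> e1 e2 e3 eG mG m1 m2 m3 e123 h1 h2 h3 [_ _ ID IM] hc.
split=> [Ic|[[c1 [I1 /esym/(rmodp_eq_add_mul m1) E1]] [c2 [I2 /esym/(rmodp_eq_add_mul m2) E2]]
            [c3 [I3 /esym/(rmodp_eq_add_mul m3) E3]]]]; first by split; exists c.
move: E1 E2 E3; set d1 := (_ - _); set d2 := (_ - _); set d3 := (_ - _) => E1 E2 E3.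
suff <- : qmod (skew_mul th e1 c1) G + qmod (skew_mul th e2 c2) G
  + qmod (skew_mul th e3 c3) G = c by apply/ID; [apply/ID|]; apply/IM.
rewrite /qmod h1 h2 h3 -!(Pdiv.RingMonic.rmodpD mG) -[RHS](rmodp_small hc).
apply: (rmodp_add_mul_eq (q := t1 * d1 + t2 * d2 + t3 * d3)) => //.
rewrite E1 E2 E3 eG.
transitivity (c * (e1 + e2 + e3) + (t1 * d1 + t2 * d2 + t3 * d3) * (g1 * g2 * g3)).
  by rewrite /e1 /e2 /e3; ring.
by rewrite e123 mulr1.
Qed.

End ChineseRemainder.

Section LeftMulX.
Variables (R : comNzRingType) (th : {rmorphism R -> R}) (G : {poly R}).
Hypotheses (monicG : G \is monic) (thG : map_poly th G = G).

Definition xmul (v : {poly R}) := rmodp ('X * map_poly th v) G.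

Lemma rmodp_xmul w : rmodp ('X * map_poly th w) G = xmul (rmodp w G).
Proof.
apply: (rmodp_add_mul_eq (q := 'X * map_poly th (rdivp w G))) => //.
rewrite {1}(Pdiv.RingMonic.rdivp_eq monicG w) rmorphD rmorphM /= thG; ring.
Qed.

Lemma iter_xmul i v : iter i xmul (rmodp v G) = rmodp ('X^i * iter i (map_poly th) v) G.
Proof.
elim: i => [|i IH]; first by rewrite /= expr0 mul1r.
by rewrite iterS IH -rmodp_xmul rmorphM /= map_polyXn exprS mulrA.
Qed.

Lemma qmod_skew_mul (a v : {poly R}) : (size v < size G)%N ->
  qmod (skew_mul th a v) G = \sum_(i < size a) a`_i *: iter i xmul v.
Proof.
move=> hv; rewrite /qmod skew_mulE (Pdiv.RingMonic.rmodp_sum monicG).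
apply: eq_bigr => i _.
by rewrite (Pdiv.RingMonic.rmodpZ monicG) -{2}(rmodp_small hv) iter_xmul.
Qed.

Lemma left_ideal_iter_xmul (I : {poly R} -> Prop) i c :
  skew_left_ideal th G I -> I c -> I (iter i xmul c).
Proof.
case=> _ _ _ IM; elim: i => [|i IH] //= /IH /(IM 'X).
by rewrite /qmod skew_mulXl.
Qed.

End LeftMulX.

Section NegacyclicDual.
Variables (R : comNzRingType) (th : {rmorphism R -> R}) (N : nat).
Hypothesis N_gt0 : (0 < N)%N.
Local Notation G := ('X^N + 1 : {poly R}).
Local Notation shift := (xmul th G).
Implicit Types (c d v : {poly R}).

Lemma monic_XnD1 : G \is monic.
Proof. by rewrite -polyC1 monicXnaddC. Qed.

Lemma size_XnD1 : size G = N.+1.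
Proof. by rewrite -polyC1 size_XnaddC. Qed.

Lemma map_poly_XnD1 : map_poly th G = G.
Proof. by rewrite rmorphD rmorph1 /= map_polyXn. Qed.

Lemma coef_xmul_XnD1 v j : (size v <= N)%N -> (j < N)%N ->
  (shift v)`_j = if j == 0%N then - th v`_N.-1 else th v`_j.-1.
Proof.
move=> hv hj; set c := th v`_N.-1.
have coefG i : G`_i = (i == N)%:R + (i == 0%N)%:R by rewrite coefD coefXn coef1.
have -> : shift v = 'X * map_poly th v - c%:P * G.
  rewrite /xmul; set r := (X in _ = X).
  have -> : 'X * map_poly th v = c%:P * G + r by rewrite /r; ring.
  apply: (Pdiv.RingMonic.rmodp_addl_mul_small monic_XnD1).
  rewrite size_XnD1 ltnS; apply/leq_sizeP => i hi.
  rewrite coefB coefXM coefCM coefG (gtn_eqF (leq_trans N_gt0 hi)) addr0.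
  have [->|hiN] := eqVneq i N; first by rewrite coef_map /= mulr1 subrr.
  rewrite mulr0 subr0 coef_map /= nth_default ?rmorph0 //.
  by apply: leq_trans hv _; rewrite -ltnS prednK ?(leq_trans N_gt0 hi) // ltn_neqAle eq_sym hiN.
rewrite coefB coefXM coefCM coefG (ltn_eqF hj) add0r coef_map /=.
by case: eqP => _; rewrite ?mulr1 ?mulr0 ?sub0r ?subr0.
Qed.

Lemma dot_xmul_XnD1 c d : (size c <= N)%N -> (size d <= N)%N ->
  \sum_(i < N) (shift c)`_i * (shift d)`_i = th (\sum_(i < N) c`_i * d`_i).
Proof.
move=> hc hd; case: N N_gt0 hc hd coef_xmul_XnD1 => // n _ hc hd cS.
rewrite big_ord_recl big_ord_recr /= rmorphD rmorph_sum /= !cS //= addrC mulrNN rmorphM.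
congr (_ + _); apply: eq_bigr => i _; rewrite !cS //= ?rmorphM //.
all: by rewrite ltnS ltn_ord.
Qed.

(* x^N = -1, hence x^(2N) = 1, modulo x^N + 1. *)
Lemma iter_xmul_period v : (size v <= N)%N -> (forall x, iter (2 * N) th x = x) ->
  iter (2 * N) shift v = v.
Proof.
move=> hv th_period; have hv' : (size v < size G)%N by rewrite size_XnD1 ltnS.
rewrite -{1}(rmodp_small hv') (iter_xmul monic_XnD1 map_poly_XnD1).
have -> : iter (2 * N) (map_poly th) v = v.
  by apply/polyP => j; rewrite coef_iter_map_poly th_period.
rewrite -[RHS](rmodp_small hv').
apply: (rmodp_add_mul_eq (q := ('X^N - 1) * v)); first exact: monic_XnD1.
by rewrite mulnC exprM; ring.
Qed.

Lemma euclid_dual_left_ideal (C : {poly R} -> Prop) : skew_left_ideal th G C ->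
  (forall x, iter (2 * N) th x = x) -> skew_left_ideal th G (euclid_dual N C).
Proof.
move=> hC th_period; have [Csz _ _ _] := hC.
have CszN c : C c -> (size c <= N)%N by move/Csz; rewrite size_XnD1 ltnS.
have D0 : euclid_dual N C 0.
  by split; rewrite ?size_poly0 // => c _; apply: big1 => i _; rewrite coef0 mulr0.
have DD d e : euclid_dual N C d -> euclid_dual N C e -> euclid_dual N C (d + e).
  move=> [hd Hd] [he He]; split; first by rewrite (leq_trans (size_polyD _ _)) // geq_max hd.
  move=> c Cc; transitivity (\sum_(i < N) c`_i * d`_i + \sum_(i < N) c`_i * e`_i).
    by rewrite -big_split; apply: eq_bigr => i _; rewrite coefD mulrDr.
  by rewrite Hd // He // addr0.
have DZ x d : euclid_dual N C d -> euclid_dual N C (x *: d).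
  move=> [hd Hd]; split; first exact: leq_trans (size_scale_leq _ _) hd.
  move=> c Cc; transitivity (x * \sum_(i < N) c`_i * d`_i); last by rewrite Hd // mulr0.
  by rewrite mulr_sumr; apply: eq_bigr => i _; rewrite coefZ mulrCA.
(* Write c = x c' with c' = x^(2N-1) c in C; then <c, x d> = th <c', d> = 0. *)
have DX d : euclid_dual N C d -> euclid_dual N C (shift d).
  move=> [hd Hd]; split.
    by rewrite -ltnS -size_XnD1 ltn_rmodpN0 // monic_neq0 // monic_XnD1.
  move=> c Cc; set c' := iter (2 * N).-1 shift c.
  have Cc' : C c' by apply: left_ideal_iter_xmul hC Cc.
  have -> : c = shift c'.
    by rewrite /c' -iterS prednK ?muln_gt0 // iter_xmul_period // CszN.
  by rewrite dot_xmul_XnD1 ?(CszN c') // Hd // rmorph0.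
have DiX i d : euclid_dual N C d -> euclid_dual N C (iter i shift d).
  by move=> hd; elim: i => [|i IH] //=; apply: DX.
split=> [d [hd _]|||a d hd]; [by rewrite size_XnD1 ltnS | exact: D0 | exact: DD |].
have sd : (size d < size G)%N by rewrite size_XnD1 ltnS; case: hd.
rewrite (qmod_skew_mul monic_XnD1 map_poly_XnD1 _ sd).
by apply: (big_ind (euclid_dual N C)) => // i _; apply/DZ/DiX.
Qed.

End NegacyclicDual.

(* As in the paper, the components of the dual are listed in the order
   g1, g3, g2. *)
Definition crt_dual_decomposition (R : comNzRingType) (th : R -> R) (N : nat)
    (g1 g2 g3 : {poly R}) : Prop :=
  forall C : {poly R} -> Prop, skew_negacyclic th N C ->
    let C1 := crt_comp g1 C in
    let C2 := crt_comp g2 C in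
    let C3 := crt_comp g3 C in
    let D := euclid_dual N C in
    let D1 := crt_comp g1 D in
    let D2 := crt_comp g3 D in
    let D3 := crt_comp g2 D in
    [/\ skew_left_ideal th g1 C1 /\ skew_left_ideal th g2 C2
          /\ skew_left_ideal th g3 C3,
        forall c : {poly R}, (size c <= N)%N ->
          (C c <-> [/\ C1 (qmod c g1), C2 (qmod c g2) & C3 (qmod c g3)]),
        skew_left_ideal th g1 D1 /\ skew_left_ideal th g3 D2
          /\ skew_left_ideal th g2 D3,
        forall d : {poly R}, (size d <= N)%N ->
          (D d <-> [/\ D1 (qmod d g1), D2 (qmod d g3) & D3 (qmod d g2)]) &
        ((forall c : {poly R}, C c <-> D c) <->
         [/\ forall r : {poly R}, C1 r <-> D1 r,
             forall r : {poly R}, C2 r <-> D3 r &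
             forall r : {poly R}, C3 r <-> D2 r])].

Lemma eq_crt_comp (R : comNzRingType) (g : {poly R}) (C D : {poly R} -> Prop) :
  (forall c, C c <-> D c) -> forall r, crt_comp g C r <-> crt_comp g D r.
Proof. by move=> CD r; split=> -[c [hc ->]]; exists c; split=> //; apply/CD. Qed.

Lemma eq_crt_compP (R : comNzRingType) (N : nat) (g1 g2 g3 : {poly R})
    (C D : {poly R} -> Prop) :
  (forall c : {poly R}, C c -> size c <= N)%N ->
  (forall d : {poly R}, D d -> size d <= N)%N ->
  (forall c : {poly R}, (size c <= N)%N ->
     C c <-> [/\ crt_comp g1 C (qmod c g1), crt_comp g2 C (qmod c g2)
               & crt_comp g3 C (qmod c g3)]) ->
  (forall d : {poly R}, (size d <= N)%N ->
     D d <-> [/\ crt_comp g1 D (qmod d g1), crt_comp g2 D (qmod d g2)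
               & crt_comp g3 D (qmod d g3)]) ->
  (forall c, C c <-> D c) <->
  [/\ forall r, crt_comp g1 C r <-> crt_comp g1 D r,
      forall r, crt_comp g2 C r <-> crt_comp g2 D r &
      forall r, crt_comp g3 C r <-> crt_comp g3 D r].
Proof.
move=> szC szD decC decD; split=> [CD|[E1 E2 E3] c]; first by split; apply: eq_crt_comp.
split=> [Cc|Dc].
  by have [? ? ?] := (decC c (szC c Cc)).1 Cc; apply/(decD c (szC c Cc)); split;
    [apply/E1|apply/E2|apply/E3].
by have [? ? ?] := (decD c (szD c Dc)).1 Dc; apply/(decC c (szD c Dc)); split;
  [apply/E1|apply/E2|apply/E3].
Qed.

Lemma skew_negacyclic_crt (R : comNzRingType) (th : {rmorphism R -> R}) (N : nat)
    (g1 g2 g3 t1 t2 t3 : {poly R}) :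
  let e1 := t1 * (g2 * g3) in let e2 := t2 * (g1 * g3) in let e3 := t3 * (g1 * g2) in
  (0 < N)%N -> 'X^N + 1 = g1 * g2 * g3 ->
  g1 \is monic -> g2 \is monic -> g3 \is monic ->
  map_poly th g1 = g1 -> map_poly th g2 = g2 -> map_poly th g3 = g3 ->
  e1 + e2 + e3 = 1 -> (forall v, skew_mul th e1 v = e1 * v) ->
  (forall v, skew_mul th e2 v = e2 * v) -> (forall v, skew_mul th e3 v = e3 * v) ->
  (forall x, iter (2 * N) th x = x) ->
  crt_dual_decomposition th N g1 g2 g3.
Proof.
move=> e1 e2 e3 N_gt0 eG m1 m2 m3 th1 th2 th3 e123 h1 h2 h3 th_period.
move=> C hC C1 C2 C3 D D1 D2 D3.
have mG := monic_XnD1 R N_gt0; have sG := size_XnD1 R N_gt0.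
have hD : skew_left_ideal th ('X^N + 1) D by apply: euclid_dual_left_ideal.
have eG1 : 'X^N + 1 = g1 * (g2 * g3) by rewrite eG mulrA.
have eG2 : 'X^N + 1 = g2 * (g1 * g3) by rewrite eG; ring.
have eG3 : 'X^N + 1 = g3 * (g1 * g2) by rewrite eG; ring.
have decD (d : {poly R}) : (size d <= N)%N ->
    D d <-> [/\ D1 (qmod d g1), D3 (qmod d g2) & D2 (qmod d g3)].
  by move=> hd; apply: (crt_comp_decomposition (G := 'X^N + 1) (t1 := t1) (t2 := t2) (t3 := t3));
    rewrite // sG ltnS.
have decC (c : {poly R}) : (size c <= N)%N ->
    C c <-> [/\ C1 (qmod c g1), C2 (qmod c g2) & C3 (qmod c g3)].
  by move=> hc; apply: (crt_comp_decomposition (G := 'X^N + 1) (t1 := t1) (t2 := t2) (t3 := t3));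
    rewrite // sG ltnS.
have szC (c : {poly R}) : C c -> (size c <= N)%N by case: hC => hsz _ _ _ /hsz; rewrite sG ltnS.
have szD (d : {poly R}) : D d -> (size d <= N)%N by case.
split=> //.
- by split; [|split]; [apply: (crt_comp_left_ideal eG1) | apply: (crt_comp_left_ideal eG2)
    | apply: (crt_comp_left_ideal eG3)].
- by split; [|split]; [apply: (crt_comp_left_ideal eG1) | apply: (crt_comp_left_ideal eG3)
    | apply: (crt_comp_left_ideal eG2)].
- by move=> d hd; apply: iff_trans (decD d hd) _; split=> -[? ? ?].
exact: eq_crt_compP szC szD decC decD.
Qed.

Lemma unit_add_nilpotent (R : comNzRingType) (a a' n : R) k :
  a * a' = 1 -> n ^+ k = 0 -> exists y, (a + n) * y = 1.
Proof.
move=> aa' nk; set x := a' * n; exists (a' * \sum_(i < k) (- x) ^+ i).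
have xk : (- x) ^+ k = 0 by rewrite exprNn /x exprMn nk !mulr0.
have geom := subrX1 (- x) k; rewrite xk sub0r in geom.
have -> : (a + n) * (a' * \sum_(i < k) (- x) ^+ i)
   = - ((- x - 1) * \sum_(i < k) (- x) ^+ i) + (a * a' - 1) * \sum_(i < k) (- x) ^+ i.
  by rewrite /x; ring.
by rewrite -geom aa' subrr mul0r addr0 opprK.
Qed.

Lemma size2_root (F : fieldType) (q : {poly F}) : size q = 2 -> exists x, root q x.
Proof.
move=> sq; have q1 : q`_1 != 0.
  by have := lead_coef_eq0 q; rewrite lead_coefE sq /= => ->; rewrite -size_poly_eq0 sq.
exists (- q`_0 / q`_1); apply/rootP.
rewrite horner_coef sq !big_ord_recl big_ord0 /= expr0 expr1 mulr1 addr0.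
by field.
Qed.

Section Residue.
Variables (F : fieldType) (k : nat).
Local Notation R := (Rk F k).

(* For k = 0, qpoly replaces the modulus u^0 by u, so R_0 = F[u]/<u> and the
   nilpotency index of u is k.-1.+1 rather than k. *)
Lemma coef0_rmodp_Xk (q : {poly F}) : (rmodp q (mk_monic ('X^k : {poly F})))`_0 = q`_0.
Proof.
rewrite mk_monic_Xn {2}(Pdiv.RingMonic.rdivp_eq (monicXn _ k.-1.+1) q).
by rewrite coefD coefMXn add0r.
Qed.

Definition residue (r : R) : F := (r : {poly F})`_0.

Lemma residue_is_zmod_morphism : zmod_morphism residue.
Proof. by move=> x y; rewrite /residue /= coefB. Qed.

Lemma residue_is_monoid_morphism : monoid_morphism residue.
Proof.
split; first by rewrite /residue qpolyCE coefC.
by move=> x y; rewrite /residue poly_of_qpolyM coef0_rmodp_Xk coef0M.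
Qed.

HB.instance Definition _ := GRing.isZmodMorphism.Build R F residue
  residue_is_zmod_morphism.
HB.instance Definition _ := GRing.isMonoidMorphism.Build R F residue
  residue_is_monoid_morphism.

Lemma residueC c : residue (qpolyC _ c) = c.
Proof. by rewrite /residue qpolyCE coefC. Qed.

Definition uvar : R := in_qpoly _ 'X.

Lemma uvar_nilpotent : uvar ^+ k.-1.+1 = 0.
Proof.
apply: val_inj; rewrite /uvar -rmorphXn /= mk_monic_Xn.
by rewrite (Pdiv.RingMonic.rmodpp (monicXn _ _)).
Qed.

Definition udiv (r : R) : R :=
  in_qpoly _ (\poly_(i < size (r : {poly F})) (r : {poly F})`_i.+1).

Lemma udiv0 : udiv 0 = 0.
Proof. by rewrite /udiv size_poly0 poly_def big_ord0 in_qpoly0. Qed.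

Lemma residue_eq0_udivK r : residue r = 0 -> r = uvar * udiv r.
Proof.
move=> r0; rewrite /uvar /udiv -rmorphM /=; apply: val_inj => /=.
set q := \poly_(_ < _) _.
have -> : 'X * q = (r : {poly F}).
  apply/polyP => j; rewrite coefXM coef_poly; case: j => [|j] //=.
  by case: ltnP => // hj; rewrite nth_default //; exact: leqW.
by rewrite (rmodp_small (size_mk_monic r)).
Qed.

Lemma unit_residue_neq0 (r : R) : residue r != 0 -> exists s, r * s = 1.
Proof.
move=> r0; set c := residue r.
rewrite -[r](subrK (qpolyC _ c)) addrC.
apply: (unit_add_nilpotent (a' := qpolyC _ c^-1) (k := k.-1.+1)).
  by rewrite -qpolyCM mulfV.
rewrite [_ - _]residue_eq0_udivK; last by rewrite rmorphB /= residueC subrr.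
by rewrite exprMn uvar_nilpotent mul0r.
Qed.

Lemma poly_unit_residue (g : {poly R}) : residue g`_0 != 0 ->
  (forall i, (0 < i)%N -> residue g`_i = 0) -> Defs.poly_unit g.
Proof.
move=> g0 gi; have [s g0s] := unit_residue_neq0 g0.
set n := g - (g`_0)%:P; rewrite -[g](subrK (g`_0)%:P) addrC -/n.
have nE : n = uvar%:P * map_poly udiv n.
  apply/polyP => j; rewrite coefCM coef_map_id0 ?udiv0 //; apply: residue_eq0_udivK.
  rewrite /n coefB coefC; case: j => [|j] /=; first by rewrite subrr rmorph0.
  by rewrite subr0 gi.
apply: (unit_add_nilpotent (a' := s%:P) (k := k.-1.+1)); first by rewrite -polyCM g0s.
by rewrite nE exprMn -rmorphXn /= uvar_nilpotent polyC0 mul0r.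
Qed.

Lemma poly_unit_size_residue (g : {poly R}) :
  size (map_poly residue g) = 1%N -> Defs.poly_unit g.
Proof.
move=> sg; apply: poly_unit_residue.
  rewrite -coef_map; have := lead_coef_eq0 (map_poly residue g).
  by rewrite lead_coefE sg /= => ->; rewrite -size_poly_eq0 sg.
by move=> i i_gt0; rewrite -coef_map nth_default // sg.
Qed.

(* A factor whose residue is a nonzero constant is a unit (its other
   coefficients are nilpotent), so a factorisation into non-units reduces to
   one with a linear factor, giving a root. *)
Lemma irreducible_residue_noroot (f : {poly R}) : f \is monic -> size f = 3%N ->
  (forall x : F, ~~ root (map_poly residue f) x) -> poly_irreducible f.
Proof.
move=> mf sf noroot; set f' := map_poly residue f.
have sf' : size f' = 3%N by rewrite size_map_poly_id0 // (monicP mf) rmorph1 oner_neq0.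
have f'0 : f' != 0 by rewrite -size_poly_eq0 sf'.
have factor_size g h : map_poly residue (g * h) != 0 ->
    [/\ map_poly residue g != 0, map_poly residue h != 0 &
        size (map_poly residue (g * h))
          = (size (map_poly residue g) + size (map_poly residue h)).-1].
  rewrite rmorphM /= mulf_eq0 negb_or => /andP[g0 h0].
  by split=> //; rewrite size_mul.
split; first exact: monic_neq0.
  case=> g fg; have fg0 : map_poly residue (f * g) != 0 by rewrite fg rmorph1 oner_neq0.
  have [_ g'0] := factor_size f g fg0; rewrite fg rmorph1 size_poly1 -/f' sf'.
  by have := size_poly_gt0 (map_poly residue g); rewrite g'0; lia.
move=> g h fgh; have gh0 : map_poly residue (g * h) != 0 by rewrite -fgh.
have [g'0 h'0] := factor_size g h gh0; rewrite -fgh -/f' sf' => sgh.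
have := size_poly_gt0 (map_poly residue g); have := size_poly_gt0 (map_poly residue h).
rewrite g'0 h'0 => h'_gt0 g'_gt0.
have [sg1|sg1] := eqVneq (size (map_poly residue g)) 1%N.
  by left; apply: poly_unit_size_residue.
have [sh1|sh1] := eqVneq (size (map_poly residue h)) 1%N.
  by right; apply: poly_unit_size_residue.
have [x gx] : exists x, root (map_poly residue g) x by apply: size2_root; lia.
by have := noroot x; rewrite fgh rmorphM rootM gx.
Qed.

End Residue.

Lemma size_quadratic_tail (R : nzRingType) (c : R) :
  (size (c *: 'X + 1 : {poly R})%R < size ('X^2 : {poly R}))%N.
Proof.
rewrite size_polyXn ltnS (leq_trans (size_polyD _ _)) // geq_max size_poly1.
by rewrite (leq_trans (size_scale_leq _ _)) ?size_polyX.
Qed.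

Lemma monic_quadratic (R : nzRingType) (c : R) : ('X^2 + c *: 'X + 1 : {poly R}) \is monic.
Proof. by rewrite -addrA monicE lead_coefDl ?lead_coefXn ?size_quadratic_tail. Qed.

Lemma size_quadratic (R : nzRingType) (c : R) : size ('X^2 + c *: 'X + 1 : {poly R}) = 3%N.
Proof. by rewrite -addrA size_polyDl ?size_quadratic_tail // size_polyXn. Qed.

Lemma map_poly_quadratic (R S : nzRingType) (f : {rmorphism R -> S}) (c : R) :
  map_poly f ('X^2 + c *: 'X + 1) = 'X^2 + f c *: 'X + 1.
Proof. by rewrite !rmorphD rmorph1 /= linearZ /= map_polyXn map_polyX. Qed.

(* The discriminant of X^2 + cX + 1 is -4 or -1 in these two cases. *)
Lemma quadratic_noroot (F : fieldType) (c : F) : (forall y : F, y ^+ 2 != -1) ->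
  c = 0 \/ c ^+ 2 = 3 -> forall x, ~~ root ('X^2 + c *: 'X + 1) x.
Proof.
move=> noroot c_cases x; apply/negP => /rootP; rewrite !hornerE => fx.
suff [y y2] : exists y : F, y ^+ 2 = -1 by have := noroot y; rewrite y2 eqxx.
case: c_cases => [c0|c3].
  by exists x; rewrite -[x ^+ 2]subr0 -fx c0; ring.
exists (2 * x + c).
transitivity (4 * (x ^+ 2 + c * x + 1) + (c ^+ 2 - 4)); first by ring.
by rewrite fx c3; ring.
Qed.

Lemma quadratic_irreducible (F : fieldType) k (c : Rk F k) :
  (forall y : F, y ^+ 2 != -1) -> c = 0 \/ c ^+ 2 = 3 ->
  poly_irreducible ('X^2 + c *: 'X + 1).
Proof.
move=> noroot c_cases.
apply: irreducible_residue_noroot; rewrite ?monic_quadratic ?size_quadratic //.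
rewrite map_poly_quadratic; apply: quadratic_noroot noroot _.
case: c_cases => [->|c3]; first by left; rewrite rmorph0.
by right; rewrite -rmorphXn c3 rmorph_nat.
Qed.

Lemma finfield_sqr_neqN1 (F : finFieldType) p m : prime p -> (p %% 4 = 3)%N ->
  odd m -> #|F| = (p ^ m)%N -> forall y : F, y ^+ 2 != -1.
Proof.
move=> p_pr p4 m_odd cardF y; apply/eqP => y2.
have pcharF := card_finPcharP cardF p_pr.
have card4 : ((p ^ m) %% 4 = 3)%N.
  rewrite -modnXm p4 -(odd_double_half m) m_odd /= expnS -mul2n expnM.
  by rewrite -modnMm -modnXm /= exp1n.
have yq := expf_card y; rewrite cardF (divn_eq (p ^ m) 4) card4 in yq.
have y4 : y ^+ 4 = 1 by rewrite (_ : 4 = 2 * 2)%N // exprM y2 sqrrN expr1n.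
rewrite exprD mulnC exprM y4 expr1n mul1r (_ : 3 = 2 + 1)%N // exprD y2 expr1 mulN1r in yq.
have two_neq0 : (2%:R : F) != 0.
  apply/eqP => two0; have : 2 \in [pchar F] by rewrite inE /= two0 eqxx.
  by rewrite (pcharf_eq pcharF) inE => /eqP p2; rewrite -p2 in p4.
have : 2%:R * y = 0 by rewrite mulr2n mulrDl mul1r -{1}yq addNr.
move/eqP; rewrite mulf_eq0 (negbTE two_neq0) /= => /eqP y0.
by move: y2; rewrite y0 expr0n /= => /eqP; rewrite eq_sym oppr_eq0 oner_eq0.
Qed.

Lemma pnat_pchar_exp (R : nzRingType) p s : p \in [pchar R] -> [pchar R].-nat (p ^ s)%N.
Proof.
move=> pcharR; rewrite (eq_pnat _ (pcharf_eq pcharR)) pnatX pnat_id ?orbT //.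
exact: pcharf_prime pcharR.
Qed.

Section Frobenius.
Variables (R : comNzRingType) (q : nat).
Hypothesis q_pnat : [pchar R].-nat q.

Lemma exprDn_pchar_poly (f g : {poly R}) : (f + g) ^+ q = f ^+ q + g ^+ q.
Proof. by apply: exprDn_pchar; rewrite (eq_pnat _ (@pchar_poly R)). Qed.

Lemma exp_pchar_comp_Xn (f : {poly R}) : exists g, f ^+ q = g \Po 'X^q.
Proof.
have q_gt0 : (0 < q)%N by case/andP: q_pnat.
elim/poly_ind: f => [|f c [g fg]]; first by exists 0; rewrite comp_poly0 expr0n gtn_eqF.
exists (g * 'X + (c ^+ q)%:P).
rewrite exprDn_pchar_poly exprMn fg comp_polyD comp_polyM comp_polyX comp_polyC.
by rewrite rmorphXn.
Qed.

(* f^q only involves powers x^(qj), and x^q commutes with everything once th^q = 1. *)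
Lemma skew_mul_exp_pchar (th : {rmorphism R -> R}) (f v : {poly R}) :
  (forall x, iter q th x = x) -> skew_mul th (f ^+ q) v = f ^+ q * v.
Proof.
move=> th_q; have q_gt0 : (0 < q)%N by case/andP: q_pnat.
have [g ->] := exp_pchar_comp_Xn f.
apply: skew_mul_invariant => i; rewrite coef_comp_poly_Xn //.
case: ifP => [/dvdnP [j ->] _|]; last by rewrite eqxx.
rewrite iterM; elim: j => [|j IH] //=; rewrite IH.
by apply/polyP => l; rewrite coef_iter_map_poly th_q.
Qed.

Lemma factor_exp_pchar n (f1 f2 f3 : {poly R}) : f1 * f2 * f3 = 'X^n + 1 ->
  'X^(n * q) + 1 = f1 ^+ q * f2 ^+ q * f3 ^+ q.
Proof. by move=> f123; rewrite -!exprMn f123 exprDn_pchar_poly expr1n -exprM. Qed.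

Lemma bezout_exp_pchar (f1 f2 f3 t1 t2 t3 : {poly R}) :
  t1 * (f2 * f3) + t2 * (f1 * f3) + t3 * (f1 * f2) = 1 ->
  t1 ^+ q * (f2 ^+ q * f3 ^+ q) + t2 ^+ q * (f1 ^+ q * f3 ^+ q)
    + t3 ^+ q * (f1 ^+ q * f2 ^+ q) = 1.
Proof. by move=> bezout; rewrite -!exprMn -!exprDn_pchar_poly bezout expr1n. Qed.

End Frobenius.

Lemma iter_mull_id (T : Type) (f : T -> T) n m :
  (forall x, iter n f x = x) -> forall x, iter (m * n) f x = x.
Proof. by move=> fn x; rewrite iterM; elim: m => [|m IH] //=; rewrite IH fn. Qed.

Section Sextic.
Variables (R : comNzRingType) (b : R).
Hypothesis b_sqr : b ^+ 2 = 3.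
Local Notation f1 := ('X^2 + 1 : {poly R}).
Local Notation f2 := ('X^2 + b *: 'X + 1 : {poly R}).
Local Notation f3 := ('X^2 - b *: 'X + 1 : {poly R}).

Lemma polyCb_sqr : b%:P ^+ 2 = 3 :> {poly R}.
Proof. by rewrite -rmorphXn b_sqr /= polyC_natr. Qed.

Lemma sextic_factor : f1 * f2 * f3 = 'X^6 + 1.
Proof.
rewrite -!mul_polyC.
transitivity ('X^6 + 1 + (3 - b%:P ^+ 2) * ('X^4 + 'X^2)); first by ring.
by rewrite polyCb_sqr subrr mul0r addr0.
Qed.

Lemma sextic_bezout (i6 : R) : 6 * i6 = 1 ->
  i6%:P * 2 * (f2 * f3) + i6%:P * (b%:P * 'X + 2) * (f1 * f3)
    + i6%:P * (2 - b%:P * 'X) * (f1 * f2) = 1.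
Proof.
move=> i6K; have I6K : i6%:P * 6 = 1 :> {poly R}.
  by rewrite -polyC_natr -polyCM mulrC i6K.
rewrite -!mul_polyC.
transitivity (i6%:P * 6 + i6%:P * (3 - b%:P ^+ 2) * (2 * 'X^4 + 4 * 'X^2)); first by ring.
by rewrite polyCb_sqr subrr mulr0 mul0r addr0.
Qed.

Variables (th : {rmorphism R -> R}) (q : nat).
Hypotheses (q_pnat : [pchar R].-nat q) (th_q : forall x, iter q th x = x).
Hypothesis th_b : th b = b.

Lemma sextic_exp_factor : 'X^(6 * q) + 1 = f1 ^+ q * f2 ^+ q * f3 ^+ q.
Proof. exact/(factor_exp_pchar q_pnat)/sextic_factor. Qed.

Lemma sextic_negacyclic_crt (i6 : R) : 6 * i6 = 1 ->
  crt_dual_decomposition th (6 * q) (f1 ^+ q) (f2 ^+ q) (f3 ^+ q).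
Proof.
move=> i6K; have q_gt0 : (0 < q)%N by case/andP: q_pnat.
have f1E : f1 = 'X^2 + 0 *: 'X + 1 by rewrite scale0r addr0.
have f3E : f3 = 'X^2 + (- b) *: 'X + 1 by rewrite scaleNr.
have th_f c : th c = c -> map_poly th (('X^2 + c *: 'X + 1) ^+ q) = ('X^2 + c *: 'X + 1) ^+ q.
  by move=> thc; rewrite rmorphXn /= map_poly_quadratic thc.
apply: (skew_negacyclic_crt (t1 := (i6%:P * 2) ^+ q) (t2 := (i6%:P * (b%:P * 'X + 2)) ^+ q)
  (t3 := (i6%:P * (2 - b%:P * 'X)) ^+ q)).
- by rewrite muln_gt0 q_gt0.
- exact: sextic_exp_factor.
- by rewrite f1E monic_exp ?monic_quadratic.
- by rewrite monic_exp ?monic_quadratic.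
- by rewrite f3E monic_exp ?monic_quadratic.
- by rewrite f1E th_f ?rmorph0.
- by rewrite th_f.
- by rewrite f3E th_f ?rmorphN ?th_b.
- exact/(bezout_exp_pchar q_pnat)/sextic_bezout.
- by move=> v; rewrite -!exprMn skew_mul_exp_pchar.
- by move=> v; rewrite -!exprMn skew_mul_exp_pchar.
- by move=> v; rewrite -!exprMn skew_mul_exp_pchar.
by move=> x; rewrite mulnA iter_mull_id.
Qed.

End Sextic.

Lemma natr_FpM (T : nzRingType) p : prime p -> p \in [pchar T] ->
  forall x y : 'F_p, (((x * y)%R : 'F_p) : nat)%:R = (x : nat)%:R * (y : nat)%:R :> T.
Proof.
move=> p_pr pcharT x y.
have pcharT' : (Zp_trunc (pdiv p)).+2 \in [pchar T] by rewrite Fp_cast.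
by rewrite /= (GRing.natr_mod_pchar pcharT') natrM.
Qed.

Lemma natr_Fp_nat (T : nzRingType) p : prime p -> p \in [pchar T] ->
  forall n, ((n%:R : 'F_p) : nat)%:R = n%:R :> T.
Proof. by move=> p_pr pcharT n; rewrite val_Fp_nat // (GRing.natr_mod_pchar pcharT). Qed.

Lemma natr_unit_pchar (T : nzRingType) p n : prime p -> p \in [pchar T] ->
  (n %% p != 0)%N -> exists y : T, n%:R * y = 1.
Proof.
move=> p_pr pcharT np0; exists (((n%:R : 'F_p)^-1 : 'F_p) : nat)%:R.
rewrite -(natr_Fp_nat p_pr pcharT n) -natr_FpM // mulfV //.
by apply: contra np0 => /eqP/(congr1 val); rewrite /= val_Fp_nat // => ->.
Qed.

Unset Implicit Arguments.

Theorem mainTheorem15 (p m s k : nat) (F : finFieldType)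
    (Theta : {rmorphism Rk F k -> Rk F k}) (beta : 'F_p) :
  prime p -> (p %% 12 = 11)%N -> odd m -> (0 < k)%N -> #|F| = (p ^ m)%N ->
  bijective Theta -> (forall a, iter (p ^ s)%N Theta a = a) ->
  beta ^+ 2 = 3 ->
  let b : Rk F k := (beta : nat)%:R in
  let f1 : {poly Rk F k} := 'X^2 + 1 in
  let f2 : {poly Rk F k} := 'X^2 + b *: 'X + 1 in
  let f3 : {poly Rk F k} := 'X^2 - b *: 'X + 1 in
  let N := (6 * p ^ s)%N in
  let g1 := f1 ^+ (p ^ s)%N in
  let g2 := f2 ^+ (p ^ s)%N in
  let g3 := f3 ^+ (p ^ s)%N in
  [/\ poly_irreducible f1, poly_irreducible f2, poly_irreducible f3,
      'X^N + 1 = g1 * g2 * g3 &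
      forall C : {poly Rk F k} -> Prop, skew_negacyclic Theta N C ->
        let C1 := crt_comp g1 C in
        let C2 := crt_comp g2 C in
        let C3 := crt_comp g3 C in
        let D := euclid_dual N C in
        let D1 := crt_comp g1 D in
        let D2 := crt_comp g3 D in
        let D3 := crt_comp g2 D in
        [/\ skew_left_ideal Theta g1 C1 /\ skew_left_ideal Theta g2 C2
              /\ skew_left_ideal Theta g3 C3,
            forall c : {poly Rk F k}, (size c <= N)%N ->
              (C c <-> [/\ C1 (qmod c g1), C2 (qmod c g2) & C3 (qmod c g3)]),
            skew_left_ideal Theta g1 D1 /\ skew_left_ideal Theta g3 D2
              /\ skew_left_ideal Theta g2 D3,
            forall d : {poly Rk F k}, (size d <= N)%N ->
              (D d <-> [/\ D1 (qmod d g1), D2 (qmod d g3) & D3 (qmod d g2)]) &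
            ((forall c : {poly Rk F k}, C c <-> D c) <->
             [/\ forall r : {poly Rk F k}, C1 r <-> D1 r,
                 forall r : {poly Rk F k}, C2 r <-> D3 r &
                 forall r : {poly Rk F k}, C3 r <-> D2 r])]].
Proof.
move=> p_pr p_mod12 m_odd _ cardF _ Theta_q beta_sqr b f1 f2 f3 N g1 g2 g3.
have pcharR : p \in [pchar Rk F k] by rewrite pchar_qpoly (card_finPcharP cardF).
have q_pnat : [pchar Rk F k].-nat (p ^ s)%N by apply: pnat_pchar_exp.
have b_sqr : b ^+ 2 = 3.
  by rewrite /b expr2 -natr_FpM // -expr2 beta_sqr natr_Fp_nat.
have [i6 i6K] : exists i6 : Rk F k, 6 * i6 = 1.
  by apply: (natr_unit_pchar p_pr pcharR); rewrite modn_small //; lia.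
have p_mod4 : (p %% 4 = 3)%N by lia.
have noroot := finfield_sqr_neqN1 p_pr p_mod4 m_odd cardF.
split.
- by have := @quadratic_irreducible _ k 0 noroot (or_introl erefl); rewrite scale0r addr0.
- exact: quadratic_irreducible noroot (or_intror b_sqr).
- have := @quadratic_irreducible _ _ (- b) noroot.
  by rewrite scaleNr sqrrN; apply; right.
- exact: (sextic_exp_factor b_sqr q_pnat).
exact: (sextic_negacyclic_crt b_sqr q_pnat Theta_q (rmorph_nat _ _) i6K).
Qed.
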